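(* For every non-empty well-quasi-order $Q$, $o(\mathsf{T_f}(Q))>o(Q)$.
   Context: A well-quasi-order is a quasi-order in which every infinite sequence $(x_i)_{i<\omega}$ has $i<j$ with $x_i\le x_j$. For a wqo $P$, $o(P)$ is the supremum of the order types of linearizations of $P$, i.e. linear quasi-orders on the same set extending its order. Trees: $\mathsf{T_f}(Q)$ is the smallest class containing the leaf $\cdot q$ for each $q\in Q$, and containing $\cdot(\tau_0,\dots,\tau_{k-1})$ (an unlabelled root whose children are the $\tau_i$) for every finite set $\{\tau_0,\dots,\tau_{k-1}\}\subseteq\mathsf{T_f}(Q)$ with $k\ge1$. Its order $\le_T$ is defined recursively: - $\cdot x\le_T\cdot y$ iff $x\le_Q y$; - $\cdot x\le_T\cdot(\tau_j)_{j<l}$ iff $\cdot x\le_T\tau_j$ for some $j$; - $\cdot(\sigma_i)_{i<k}\le_T\cdot(\tau_j)_{j<l}$ iff every $\sigma_i$ is $\le_T$ some $\tau_j$; - a non-leaf tree is never $\le_T$ a leaf. *)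

From Stdlib Require Import List.
Import ListNotations.

Definition quasi_order {X : Type} (le : X -> X -> Prop) : Prop :=
  (forall x, le x x) /\ (forall x y z, le x y -> le y z -> le x z).

Definition wqo {X : Type} (le : X -> X -> Prop) : Prop :=
  quasi_order le /\
  forall f : nat -> X, exists i j, i < j /\ le (f i) (f j).

Definition strict {X : Type} (le : X -> X -> Prop) (x y : X) : Prop :=
  le x y /\ ~ le y x.

Definition linearization {X : Type} (le L : X -> X -> Prop) : Prop :=
  quasi_order L /\ (forall x y, L x y \/ L y x) /\
  (forall x y, le x y -> L x y).

(** Comparison of maximal order types without an ordinal datatype.
    For wqos P (on X) and P' (on Y), [o_lt P P'] expresses o(P) < o(P'),
    where o(P) = sup { type(L) | L linearization of P }.
    Indeed o(P) < o(P') iff there is an ordinal beta < o(P') with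
    type(M) <= beta for every linearization M of P; the ordinals
    beta < o(P') are exactly the order types of the proper initial
    segments {y | y <_L a} of linearizations L of P'; and for well-ordered
    (linear quasi-)orders, type(M) <= type(S) iff there is a map that is
    strictly increasing w.r.t. the strict parts. *)
Definition o_lt {X Y : Type} (P : X -> X -> Prop) (P' : Y -> Y -> Prop)
  : Prop :=
  exists (L : Y -> Y -> Prop) (a : Y),
    linearization P' L /\
    forall M : X -> X -> Prop, linearization P M ->
      exists f : X -> Y,
        (forall x y, strict M x y -> strict L (f x) (f y)) /\
        (forall x, strict L (f x) a).

(** Finite trees T_f(Q): leaves labelled in Q, internal nodes unlabelled
    with a finite non-empty collection of children (here a non-empty list
    [t :: ts]; the order below only depends on membership, so duplicates
    and permutations yield <=_T-equivalent trees). *)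
Inductive tree (Q : Type) : Type :=
| Leaf : Q -> tree Q
| Node : tree Q -> list (tree Q) -> tree Q.

Arguments Leaf {Q} _.
Arguments Node {Q} _ _.

Inductive tle {Q : Type} (qle : Q -> Q -> Prop) : tree Q -> tree Q -> Prop :=
| tle_leaf_leaf : forall x y, qle x y -> tle qle (Leaf x) (Leaf y)
| tle_leaf_node : forall x t ts u,
    In u (t :: ts) -> tle qle (Leaf x) u -> tle qle (Leaf x) (Node t ts)
| tle_node_node : forall s ss t ts,
    (forall sg, In sg (s :: ss) ->
       exists tau, In tau (t :: ts) /\ tle qle sg tau) ->
    tle qle (Node s ss) (Node t ts).

From Stdlib Require Import List Classical ClassicalEpsilon Lia.
Import ListNotations.
From mathcomp Require boolp wochoice.

(** Fix a well-order [W] of [Q] extending the strict part of [qle].  For a linearization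
    [M] of [Q], the upset [{z | M x z}] is generated by the antichain that lists, in
    turn, its [W]-least elements outside the upward closure of those listed before; the
    list is finite because [Q] is a wqo.  As [x] grows along [M] the upset shrinks, and
    its basis grows strictly in the lexicographic order induced by [W] in which proper
    extensions are smaller.  Each basis is encoded by a tree of height at most 6 built
    from gadgets for its first element, its consecutive pairs and its last element, so
    that an embedding between codes forces the lexicographic inequality.  Ordering trees
    first by whether they lie below some code and then by the downward closure of the
    codes below them linearizes [T_f(Q)], and every [M] maps strictly below the tower of
    height 7. *)

Lemma not_Acc_descent {T : Type} (R : T -> T -> Prop) x :
  ~ Acc R x -> exists f : nat -> T, forall n, R (f (S n)) (f n).
Proof.
  intro Hx.
  assert (step : forall y : {y | ~ Acc R y},
             exists z : {z | ~ Acc R z}, R (proj1_sig z) (proj1_sig y)).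
  { intros [y Hy]. apply NNPP; intro C. apply Hy. constructor. intros z Rz.
    apply NNPP; intro Hz. apply C. exists (exist _ z Hz). exact Rz. }
  destruct (choice _ step) as [next Hnext].
  exists (fun n => proj1_sig (Nat.iter n next (exist _ x Hx))).
  intro n. exact (Hnext _).
Qed.

Lemma well_founded_minimal {T : Type} (R : T -> T -> Prop) (P : T -> Prop) :
  well_founded R -> (exists x, P x) -> exists2 m, P m & forall y, P y -> ~ R y m.
Proof.
  intros wf [x Px]. induction (wf x) as [x _ IH].
  destruct (classic (exists2 y, P y & R y x)) as [[y Py Ry]|H].
  - exact (IH y Ry Py).
  - exists x; [exact Px|]. intros y Py Ry. apply H. exists y; assumption.
Qed.

Lemma strict_trans {X : Type} (le : X -> X -> Prop) : quasi_order le ->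
  forall x y z, strict le x y -> strict le y z -> strict le x z.
Proof.
  intros [_ le_trans] x y z [Hxy Hyx] [Hyz Hzy]. split; [eauto|].
  intro Hzx. apply Hzy. eauto.
Qed.

Lemma wqo_strict_wf {X : Type} (le : X -> X -> Prop) : wqo le -> well_founded (strict le).
Proof.
  intros [le_qo le_good] x. apply NNPP; intro Hx.
  destruct (not_Acc_descent _ x Hx) as [f Hf].
  assert (descent : forall i k, strict le (f (S k + i)) (f i)).
  { intros i k. induction k as [|k IH]; [apply Hf|].
    exact (strict_trans le le_qo _ _ _ (Hf (S k + i)) IH). }
  destruct (le_good f) as (i & j & Hij & Hle).
  destruct (descent i (j - S i)) as [_ Hn].
  replace (S (j - S i) + i) with j in Hn by lia. contradiction.
Qed.

Section WellOrderingPrinciple.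
Import ssreflect ssrbool eqtype boolp wochoice.

Lemma well_ordering (X : Type) : exists R : X -> X -> Prop,
  forall P : X -> Prop, (exists x, P x) -> exists m, P m /\ (forall y, P y -> R m y) /\
    (forall m', P m' -> (forall y, P y -> R m' y) -> m' = m).
Proof.
  have [R HR] := well_ordering_principle {classic X}.
  exists (fun x y : X => R x y = true) => P [x Px].
  have ne : nonempty [pred z : {classic X} | `[< P z >] ].
    by exists x; rewrite inE; apply/asboolP.
  have [m [[Pm lb] Hu]] := HR _ ne.
  exists m; split; first by move: Pm; rewrite inE => /asboolP.
  split; first by move=> y Py; apply: lb; rewrite inE; apply/asboolP.
  move=> m' Pm' lb'; symmetry; apply: Hu; split; first by rewrite inE; apply/asboolP.
  by move=> y; rewrite inE => /asboolP; apply: lb'.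
Qed.

End WellOrderingPrinciple.

Record well_order_extending {X : Type} (lt W : X -> X -> Prop) : Prop := {
  wo_irrefl : forall x, ~ W x x;
  wo_trans : forall x y z, W x y -> W y z -> W x z;
  wo_total : forall x y, x <> y -> W x y \/ W y x;
  wo_extends : forall x y, lt x y -> W x y;
  wo_least : forall P : X -> Prop, (exists x, P x) ->
    exists2 m, P m & forall y, P y -> m = y \/ W m y }.

Section RankOrder.
Context {X : Type} (lt : X -> X -> Prop).
Hypothesis lt_trans : forall x y z, lt x y -> lt y z -> lt x z.
Hypothesis lt_wf : well_founded lt.

(* [rank_le x y]: the ordinal rank of [x] for [lt] is at most that of [y]. *)
Inductive rank_le : X -> X -> Prop :=
  rank_le_intro x y :
    (forall x', lt x' x -> exists2 y', lt y' y & rank_le x' y') -> rank_le x y.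

Definition rank_lt x y := exists2 y', lt y' y & rank_le x y'.

Lemma rank_le_inv x y x' : rank_le x y -> lt x' x -> exists2 y', lt y' y & rank_le x' y'.
Proof. intros [? ? H]. exact (H x'). Qed.

Lemma rank_le_refl x : rank_le x x.
Proof.
  induction (lt_wf x) as [x _ IH]. constructor. intros x' Hx'. exists x'; auto.
Qed.

Lemma rank_le_trans x y z : rank_le x y -> rank_le y z -> rank_le x z.
Proof.
  revert y z. induction (lt_wf x) as [x _ IH]. intros y z Hxy Hyz.
  constructor. intros x' Hx'.
  destruct (rank_le_inv _ _ _ Hxy Hx') as [y' Hy' Hxy'].
  destruct (rank_le_inv _ _ _ Hyz Hy') as [z' Hz' Hyz'].
  exists z'; eauto.
Qed.

Lemma rank_lt_le x y : rank_lt x y -> rank_le x y.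
Proof.
  intros [y' Hy' Hxy']. constructor. intros x' Hx'.
  destruct (rank_le_inv _ _ _ Hxy' Hx') as [y'' Hy'' Hr]. exists y''; eauto.
Qed.

Lemma rank_lt_le_trans x y z : rank_lt x y -> rank_le y z -> rank_lt x z.
Proof.
  intros [y' Hy' Hxy'] Hyz. destruct (rank_le_inv _ _ _ Hyz Hy') as [z' Hz' Hyz'].
  exists z'; eauto using rank_le_trans.
Qed.

Lemma rank_le_lt_trans x y z : rank_le x y -> rank_lt y z -> rank_lt x z.
Proof. intros Hxy [z' Hz' Hyz']. exists z'; eauto using rank_le_trans. Qed.

Lemma rank_lt_irrefl x : ~ rank_lt x x.
Proof.
  induction (lt_wf x) as [x _ IH]. intros [x' Hx' Hxx'].
  destruct (rank_le_inv _ _ _ Hxx' Hx') as [x'' Hx'' Hr].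
  apply (IH x' Hx'). exists x''; assumption.
Qed.

Lemma rank_le_or_lt x y : rank_le x y \/ rank_lt y x.
Proof.
  revert y. induction (lt_wf x) as [x _ IH]. intro y.
  destruct (classic (rank_le x y)) as [H|H]; [left; exact H|right].
  assert (exists2 x', lt x' x & forall y', lt y' y -> ~ rank_le x' y') as [x' Hx' Hn].
  { apply NNPP. intro C. apply H. constructor. intros x' Hx'. apply NNPP. intro C'.
    apply C. exists x'; [exact Hx'|]. intros y' Hy' Hr. apply C'. exists y'; assumption. }
  exists x'; [exact Hx'|]. constructor. intros y' Hy'.
  destruct (IH x' Hx' y') as [Hr|Hr]; [exfalso; exact (Hn y' Hy' Hr)|exact Hr].
Qed.

Lemma rank_lt_wf : well_founded rank_lt.
Proof.
  assert (below : forall x y, rank_le y x -> Acc rank_lt y).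
  { intro x. induction (lt_wf x) as [x _ IH]. intros y Hyx. constructor.
    intros z [y' Hy' Hzy']. destruct (rank_le_inv _ _ _ Hyx Hy') as [x' Hx' Hy'x'].
    apply (IH x' Hx'). eauto using rank_le_trans. }
  intro x. exact (below x x (rank_le_refl x)).
Qed.

Variable R : X -> X -> Prop.
Hypothesis R_least : forall P : X -> Prop, (exists x, P x) ->
  exists m, P m /\ (forall y, P y -> R m y) /\
    (forall m', P m' -> (forall y, P y -> R m' y) -> m' = m).

Lemma R_total x y : R x y \/ R y x.
Proof.
  destruct (R_least (fun z => z = x \/ z = y)) as (m & Hm & Hlb & _); [eauto|].
  destruct Hm as [->| ->]; [left|right]; auto.
Qed.

Lemma R_refl x : R x x.
Proof. destruct (R_total x x); assumption. Qed.

Lemma R_anti x y : R x y -> R y x -> x = y.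
Proof.
  intros Hxy Hyx. destruct (R_least (fun z => z = x \/ z = y)) as (m & _ & _ & Hu); [eauto|].
  rewrite (Hu x), (Hu y); auto.
  - intros z [-> | ->]; auto using R_refl.
  - intros z [-> | ->]; auto using R_refl.
Qed.

Lemma R_trans x y z : R x y -> R y z -> R x z.
Proof.
  intros Hxy Hyz.
  destruct (R_least (fun w => w = x \/ w = y \/ w = z)) as (m & Hm & Hlb & _); [eauto|].
  destruct Hm as [-> | [-> | ->]]; auto.
  - rewrite (R_anti x y); auto.
  - rewrite <- (R_anti y z); auto.
Qed.

Definition rank_lex x y := rank_lt x y \/ (rank_le x y /\ rank_le y x /\ R x y /\ x <> y).

Lemma rank_lex_well_order : well_order_extending lt rank_lex.
Proof.
  split.
  - intros x [H|(_ & _ & _ & H)]; [exact (rank_lt_irrefl x H)|auto].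
  - intros x y z [H1|(H1 & H1' & R1 & N1)] [H2|(H2 & H2' & R2 & N2)].
    + left. eauto using rank_lt_le_trans, rank_lt_le.
    + left. eauto using rank_lt_le_trans.
    + left. eauto using rank_le_lt_trans.
    + right. split; [eauto using rank_le_trans|]. split; [eauto using rank_le_trans|].
      split; [eauto using R_trans|]. intros <-. apply N1. auto using R_anti.
  - intros x y Hxy.
    destruct (rank_le_or_lt x y) as [H|H]; [|right; left; exact H].
    destruct (rank_le_or_lt y x) as [H'|H']; [|left; left; exact H'].
    destruct (R_total x y); [left|right]; right; auto.
  - intros x y Hxy. left. exists x; auto using rank_le_refl.
  - intros P HP. destruct (well_founded_minimal rank_lt P rank_lt_wf HP) as [z0 Pz0 Hz0].
    destruct (R_least (fun y => P y /\ rank_le y z0)) as (m & [Pm Hm] & Hlb & _).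
    { exists z0. auto using rank_le_refl. }
    exists m; [exact Pm|]. intros y Py.
    assert (z0_le : forall w, P w -> rank_le z0 w).
    { intros w Pw. destruct (rank_le_or_lt z0 w) as [H|H]; [exact H|exfalso; exact (Hz0 w Pw H)]. }
    destruct (rank_le_or_lt y z0) as [Hyz|Hyz].
    + destruct (classic (m = y)) as [E|E]; [left; exact E|].
      right. right. split; [eauto using rank_le_trans|]. split; [eauto using rank_le_trans|].
      auto.
    + right. left. eauto using rank_le_lt_trans.
Qed.

End RankOrder.

Lemma well_order_extension {X : Type} (lt : X -> X -> Prop) :
  (forall x y z, lt x y -> lt y z -> lt x z) -> well_founded lt ->
  exists W, well_order_extending lt W.
Proof.
  intros lt_trans lt_wf. destruct (well_ordering X) as [R HR].
  exists (rank_lex lt R). exact (rank_lex_well_order lt lt_trans lt_wf R HR).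
Qed.

Section Lexicographic.
Context {X : Type} (W : X -> X -> Prop).

(* Proper extensions count as smaller: the greedy basis of a larger upset is longer. *)
Fixpoint lex_lt (l1 l2 : list X) : Prop :=
  match l1, l2 with
  | [], _ => False
  | _ :: _, [] => True
  | a :: r1, b :: r2 => W a b \/ (a = b /\ lex_lt r1 r2)
  end.

Definition lex_le l1 l2 := lex_lt l1 l2 \/ l1 = l2.

Lemma lex_lt_app_l p r s : lex_lt r s -> lex_lt (p ++ r) (p ++ s).
Proof. induction p as [|a p IH]; simpl; auto. Qed.

Hypothesis W_irrefl : forall x, ~ W x x.
Hypothesis W_trans : forall x y z, W x y -> W y z -> W x z.
Hypothesis W_total : forall x y, x <> y -> W x y \/ W y x.

Lemma lex_lt_irrefl l : ~ lex_lt l l.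
Proof.
  induction l as [|a l IH]; simpl; [auto|]. intros [H|[_ H]]; [exact (W_irrefl a H)|auto].
Qed.

Lemma lex_lt_trans l1 l2 l3 : lex_lt l1 l2 -> lex_lt l2 l3 -> lex_lt l1 l3.
Proof.
  revert l2 l3.
  induction l1 as [|a l1 IH]; intros [|b l2] [|c l3]; simpl; try tauto.
  intros [H1|[<- H1]] [H2|[<- H2]]; eauto.
Qed.

Lemma lex_lt_total l1 l2 : l1 <> l2 -> lex_lt l1 l2 \/ lex_lt l2 l1.
Proof.
  revert l2. induction l1 as [|a l1 IH]; intros [|b l2] Hne; simpl; auto.
  destruct (classic (a = b)) as [<-|Hab].
  - assert (l1 <> l2) as Hl by congruence. destruct (IH l2 Hl); auto.
  - destruct (W_total a b Hab); auto.
Qed.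

End Lexicographic.

Lemma common_prefix {X : Type} (l1 l2 : list X) : exists p r s,
  l1 = p ++ r /\ l2 = p ++ s /\
  (r = [] \/ s = [] \/ exists a r' b s', r = a :: r' /\ s = b :: s' /\ a <> b).
Proof.
  revert l2. induction l1 as [|a l1 IH]; intros l2.
  - exists [], [], l2. auto.
  - destruct l2 as [|b l2]; [exists [], (a :: l1), []; auto|].
    destruct (classic (a = b)) as [<-|Hab].
    + destruct (IH l2) as (p & r & s & -> & -> & H). exists (a :: p), r, s. auto.
    + exists [], (a :: l1), (b :: l2). do 2 (split; [reflexivity|]). right; right. eauto 7.
Qed.

Lemma NoDup_app_disjoint {X : Type} (l l' : list X) x :
  NoDup (l ++ l') -> In x l -> ~ In x l'.
Proof.
  intros Hnd Hx Hx'. destruct (in_split x l') as (l1 & l2 & ->); [exact Hx'|].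
  rewrite app_assoc in Hnd. apply (NoDup_remove_2 _ _ _ Hnd).
  apply in_or_app. left. apply in_or_app. left. exact Hx.
Qed.

Definition adjacent {X : Type} (l : list X) x y := exists p s, l = p ++ x :: y :: s.

Lemma adjacent_cons {X : Type} (l : list X) a x y : adjacent l x y -> adjacent (a :: l) x y.
Proof. intros (p & s & ->). exists (a :: p), s. reflexivity. Qed.

Lemma adjacent_unique {X : Type} (l : list X) x y y' :
  NoDup l -> adjacent l x y -> adjacent l x y' -> y = y'.
Proof.
  intros Hnd (p & s & ->) (p' & s' & E). revert p' E.
  induction p as [|a p IH]; intros [|a' p'] E; simpl in *;
    injection E as <- Etail; [congruence| | |]; apply NoDup_cons_iff in Hnd as [Hx Hnd].
  - exfalso. apply Hx. rewrite Etail. apply in_or_app. right. now left.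
  - exfalso. apply Hx. apply in_or_app. right. now left.
  - exact (IH Hnd p' Etail).
Qed.

Lemma list_max_upper n l : In n l -> n <= list_max l.
Proof. revert n. apply Forall_forall, list_max_le, le_n. Qed.

Lemma In_last {X : Type} (l : list X) d : l <> [] -> In (last l d) l.
Proof.
  intro Hl. destruct (exists_last Hl) as (l' & x & ->). rewrite last_last.
  apply in_or_app. right. now left.
Qed.

Lemma last_app_cons {X : Type} (l s : list X) b d : last (l ++ b :: s) d = last (b :: s) d.
Proof. induction l as [|a l IH]; [reflexivity|]. destruct l; exact IH. Qed.

Lemma adjacent_In {X : Type} (l : list X) x y : adjacent l x y -> In x l /\ In y l.
Proof.
  intros (p & s & ->). split; apply in_or_app; right; [now left|right; now left].
Qed.

Section GoodSequences.
Context {X : Type} (le W : X -> X -> Prop).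

Definition antichain (l : list X) := forall x y, In x l -> In y l -> le x y -> x = y.

Definition least_of_upset a := forall z, le a z -> a = z \/ W a z.

Definition good (l : list X) :=
  l <> [] /\ NoDup l /\ antichain l /\ Forall least_of_upset l.

Lemma good_not_le_earlier p a r x : good (p ++ a :: r) -> In x p -> ~ le a x.
Proof.
  intros (_ & Hnd & Hanti & _) Hx Hax.
  assert (a = x) as <-.
  { apply Hanti; auto; apply in_or_app; auto. right. now left. }
  apply (NoDup_remove_2 _ _ _ Hnd). apply in_or_app. now left.
Qed.

End GoodSequences.

Section GreedyBasis.
Context {X : Type} (le W : X -> X -> Prop).
Hypothesis le_wqo : wqo le.
Hypothesis W_wo : well_order_extending (strict le) W.

Definition fresh (p : list X) y := forall x, In x p -> ~ le x y.

Fixpoint greedy (U : X -> Prop) (p l : list X) : Prop :=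
  match l with
  | [] => forall y, U y -> ~ fresh p y
  | a :: r => U a /\ fresh p a /\ (forall y, U y -> fresh p y -> a = y \/ W a y) /\
              greedy U (p ++ [a]) r
  end.

Lemma fresh_app_l p q y : fresh (p ++ q) y -> fresh p y.
Proof. intros H x Hx. apply H, in_or_app. now left. Qed.

Lemma fresh_extension_wf :
  well_founded (fun p' p => exists a, p' = p ++ [a] /\ fresh p a).
Proof.
  intro p. apply NNPP; intro Hp. destruct (not_Acc_descent _ p Hp) as [f Hf].
  destruct (choice _ Hf) as [g Hg].
  assert (grows : forall i k, In (g i) (f (S k + i))).
  { intros i k. induction k as [|k IH]; simpl; rewrite (proj1 (Hg _)); apply in_or_app.
    - right. now left.
    - left. exact IH. }
  destruct (proj2 le_wqo g) as (i & j & Hij & Hle).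
  apply (proj2 (Hg j) (g i)); [|exact Hle].
  replace j with (S (j - S i) + i) by lia. apply grows.
Qed.

Lemma greedy_exists U p : exists l, greedy U p l.
Proof.
  induction (fresh_extension_wf p) as [p _ IH].
  destruct (classic (exists y, U y /\ fresh p y)) as [Hne|Hnone].
  - destruct (wo_least _ _ W_wo _ Hne) as [m [Um Hm] Hmin].
    destruct (IH (p ++ [m])) as [l Hl]; [exists m; auto|].
    exists (m :: l). repeat split; auto.
  - exists []. intros y Uy Hy. apply Hnone. eauto.
Qed.

Lemma greedy_antitone U V p l1 l2 : (forall z, V z -> U z) ->
  greedy U p l1 -> greedy V p l2 -> lex_le W l1 l2.
Proof.
  intros HVU. revert p l2.
  induction l1 as [|a r IH]; intros p [|b r'] H1 H2; simpl in H1, H2.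
  - now right.
  - exfalso. destruct H2 as (Vb & Hb & _). exact (H1 b (HVU b Vb) Hb).
  - left. exact I.
  - destruct H1 as (Ua & Ha & Hmin & H1). destruct H2 as (Vb & Hb & _ & H2).
    destruct (Hmin b (HVU b Vb) Hb) as [<-|Hab].
    + destruct (IH _ _ H1 H2) as [Hlt| <-]; [left; simpl; auto|now right].
    + left. simpl. auto.
Qed.

Lemma greedy_generates U p l : (forall y z, U y -> le y z -> U z) ->
  (forall x, In x p -> U x) -> greedy U p l -> forall z, U z <-> ~ fresh (p ++ l) z.
Proof.
  intros Uup. revert p. induction l as [|a r IH]; intros p Hp Hl z; simpl in Hl.
  - rewrite app_nil_r. split; [apply Hl|].
    intro Hz. apply NNPP. intro HUz. apply Hz. intros x Hx Hxz. eauto.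
  - destruct Hl as (Ua & _ & _ & Hl). replace (p ++ a :: r) with ((p ++ [a]) ++ r).
    + apply IH; [|exact Hl]. intros x Hx. apply in_app_or in Hx as [Hx|[<-|[]]]; auto.
    + now rewrite <- app_assoc.
Qed.

Lemma greedy_good_sequence U p l : (forall y z, U y -> le y z -> U z) -> greedy U p l ->
  NoDup l /\ antichain le l /\ Forall (least_of_upset le W) l /\
  Forall (fun y => U y /\ fresh p y) l.
Proof.
  destruct le_wqo as [[le_refl le_trans] _].
  intros Uup. revert p. induction l as [|a r IH]; intros p Hl.
  { split; [constructor|]. split; [intros x y []|]. split; constructor. }
  destruct Hl as (Ua & Ha & Hmin & Hl).
  destruct (IH _ Hl) as (Hnd & Hanti & Hleast & Hr). rewrite Forall_forall in Hr.
  assert (a_not_le : forall y, In y r -> ~ le a y).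
  { intros y Hy. apply (proj2 (Hr y Hy)), in_or_app. right. now left. }
  repeat split.
  - constructor; [|exact Hnd]. intro Har. exact (a_not_le a Har (le_refl a)).
  - intros x y [<-|Hx] [<-|Hy] Hxy; auto.
    + exfalso. exact (a_not_le y Hy Hxy).
    + destruct (proj1 (Forall_forall _ r) Hleast x Hx a Hxy) as [->|Hxa]; [reflexivity|].
      destruct (Hr x Hx) as [Ux Hx'].
      destruct (Hmin x Ux (fresh_app_l _ _ _ Hx')) as [->|Hax]; [reflexivity|].
      exfalso. exact (wo_irrefl _ _ W_wo a (wo_trans _ _ W_wo _ _ _ Hax Hxa)).
  - constructor; [|exact Hleast]. intros z Haz.
    destruct (classic (le z a)) as [Hza|Hza].
    + apply Hmin; [eauto|]. intros x Hx Hxz. exact (Ha x Hx (le_trans _ _ _ Hxz Hza)).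
    + right. apply (wo_extends _ _ W_wo). split; assumption.
  - constructor; [auto|]. apply Forall_forall. intros y Hy.
    destruct (Hr y Hy) as [Uy Hy']. split; [exact Uy|exact (fresh_app_l _ _ _ Hy')].
Qed.

Lemma greedy_good U l : (forall y z, U y -> le y z -> U z) -> (exists z, U z) ->
  greedy U [] l -> good le W l.
Proof.
  intros Uup [z Uz] Hl. destruct (greedy_good_sequence U [] l Uup Hl) as (Hnd & Hanti & Hleast & _).
  repeat split; auto. intros ->. exact (Hl z Uz (fun x Hx => match Hx with end)).
Qed.

End GreedyBasis.

Section Trees.
Context {Q : Type} (qle : Q -> Q -> Prop).

Definition tree_nested_ind (P : tree Q -> Prop)
  (HL : forall x, P (Leaf x))
  (HN : forall s ss, (forall u, In u (s :: ss) -> P u) -> P (Node s ss)) : forall t, P t :=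
  fix IH (t : tree Q) : P t :=
    match t with
    | Leaf x => HL x
    | Node s ss => HN s ss (fun u Hu =>
        match Hu with
        | or_introl E => eq_rect s P (IH s) u E
        | or_intror Hu' =>
            (fix F (l : list (tree Q)) : forall u, In u l -> P u :=
               match l with
               | [] => fun u H => False_ind _ H
               | v :: l' => fun u H =>
                   match H with
                   | or_introl E => eq_rect v P (IH v) u E
                   | or_intror H' => F l' u H'
                   end
               end) ss u Hu'
        end)
    end.

Fixpoint height (t : tree Q) : nat :=
  match t with
  | Leaf _ => 0
  | Node s ss => S (list_max (map height (s :: ss)))
  end.

Fixpoint tower (k : nat) (x : Q) : tree Q :=
  match k with 0 => Leaf x | S k => Node (tower k x) [] end.

Lemma height_tower k x : height (tower k x) = k.
Proof. induction k as [|k IH]; simpl; [reflexivity|]. rewrite IH. lia. Qed.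

Lemma tle_node_leaf s ss y : ~ tle qle (Node s ss) (Leaf y).
Proof. intro H. inversion H. Qed.

Lemma tle_node_inv s ss u : tle qle (Node s ss) u -> exists t ts, u = Node t ts /\
  forall sg, In sg (s :: ss) -> exists2 tau, In tau (t :: ts) & tle qle sg tau.
Proof.
  intro H. inversion H as [| |? ? t ts Hch]; subst. exists t, ts. split; [reflexivity|].
  intros sg Hsg. destruct (Hch sg Hsg) as (tau & ? & ?). exists tau; assumption.
Qed.

Lemma tle_node_child s ss t ts sg : tle qle (Node s ss) (Node t ts) -> In sg (s :: ss) ->
  exists2 tau, In tau (t :: ts) & tle qle sg tau.
Proof.
  intros H. destruct (tle_node_inv _ _ _ H) as (t' & ts' & E & Hch). injection E as -> ->.
  exact (Hch sg).
Qed.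

Lemma tower_le_tower k l x y : tle qle (tower k x) (tower l y) -> qle x y.
Proof.
  revert l. induction k as [|k IH]; intros l H.
  - induction l as [|l IHl]; simpl in H; inversion H as [| ? ? ? ? Hu Hxu|]; subst; [assumption|].
    destruct Hu as [<-|[]]. exact (IHl Hxu).
  - destruct l as [|l]; simpl in H; [exfalso; exact (tle_node_leaf _ _ _ H)|].
    destruct (tle_node_child _ _ _ _ _ H (or_introl eq_refl)) as [tau [<-|[]] Htau].
    exact (IH l Htau).
Qed.

Lemma tle_height t u : tle qle t u -> height t <= height u.
Proof.
  revert u. induction t as [x|s ss IH] using tree_nested_ind; intros u H; [cbn [height]; lia|].
  destruct (tle_node_inv _ _ _ H) as (t & ts & -> & Hch). cbn [height]. apply le_n_S.
  apply list_max_le, Forall_forall. intros k Hk. apply in_map_iff in Hk as (sg & <- & Hsg).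
  destruct (Hch sg Hsg) as [tau Htau Hsgtau].
  transitivity (height tau); [exact (IH sg Hsg tau Hsgtau)|].
  apply list_max_upper, in_map, Htau.
Qed.

Hypothesis qle_qo : quasi_order qle.

Lemma tle_refl t : tle qle t t.
Proof.
  induction t as [x|s ss IH] using tree_nested_ind.
  - constructor. apply (proj1 qle_qo).
  - constructor. intros sg Hsg. exists sg. auto.
Qed.

Lemma tle_leaf_weaken x y t : qle x y -> tle qle (Leaf y) t -> tle qle (Leaf x) t.
Proof.
  intros Hxy H. remember (Leaf y) as ly eqn:E. induction H; inversion E; subst.
  - constructor. exact (proj2 qle_qo _ _ _ Hxy H).
  - econstructor; eauto.
Qed.

Lemma tle_trans b a c : tle qle a b -> tle qle b c -> tle qle a c.
Proof.
  revert a c. induction b as [y|t ts IH] using tree_nested_ind; intros a c Hab Hbc.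
  - inversion Hab; subst. eapply tle_leaf_weaken; eassumption.
  - destruct (tle_node_inv _ _ _ Hbc) as (v & vs & -> & Hch).
    inversion Hab as [|x ? ? u Hu Hxu|s ss ? ? Hch']; subst.
    + destruct (Hch u Hu) as [w Hw Huw]. econstructor; [exact Hw|]. exact (IH u Hu _ _ Hxu Huw).
    + constructor. intros sg Hsg. destruct (Hch' sg Hsg) as (u & Hu & Hsgu).
      destruct (Hch u Hu) as [w Hw Huw]. exists w. split; [exact Hw|]. exact (IH u Hu _ _ Hsgu Huw).
Qed.

Lemma tle_quasi_order : quasi_order (tle qle).
Proof. split; [exact tle_refl|]. intros a b c. apply tle_trans. Qed.

End Trees.

Section Encoding.
Context {Q : Type} (qle W : Q -> Q -> Prop).

(* A tree only embeds into trees at least as high, which keeps the gadget kinds apart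
   (link 2, start 3, end 4, end of a singleton 5).  The end gadget also carries the first
   element, so that a start gadget embedding into it still compares the first elements. *)
Definition start_gadget (x : Q) := tower 3 x.
Definition link_gadget (x y : Q) := Node (Leaf x) [tower 1 y].
Definition end_gadget (a : Q) r :=
  match r with [] => tower 5 a | _ :: _ => Node (Leaf (last r a)) [tower 3 a] end.

Fixpoint links (l : list Q) : list (tree Q) :=
  match l with
  | a :: (b :: _) as r => link_gadget a b :: links r
  | _ => []
  end.

Definition gadgets a r := start_gadget a :: links (a :: r) ++ [end_gadget a r].

(* The label [d] is only used for the empty sequence, which is never good. *)
Definition enc (d : Q) (l : list Q) : tree Q :=
  match l with
  | [] => Leaf d
  | a :: r => Node (start_gadget a) (links (a :: r) ++ [end_gadget a r])
  end.

Lemma In_links l h : In h (links l) -> exists x y, h = link_gadget x y /\ adjacent l x y.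
Proof.
  induction l as [|a l IH]; [intros []|]. destruct l as [|b r]; [intros []|].
  intros [<-|Hh].
  - exists a, b. split; [reflexivity|]. exists [], r. reflexivity.
  - destruct (IH Hh) as (x & y & -> & Hxy). exists x, y. split; [reflexivity|].
    apply adjacent_cons, Hxy.
Qed.

Lemma adjacent_in_links l x y : adjacent l x y -> In (link_gadget x y) (links l).
Proof.
  intros (p & s & ->). induction p as [|a p IH]; [now left|].
  destruct p; right; exact IH.
Qed.

Lemma gadgets_cases a r h : In h (gadgets a r) ->
  h = start_gadget a \/ (exists x y, h = link_gadget x y /\ adjacent (a :: r) x y) \/
  h = end_gadget a r.
Proof.
  intros [<-|Hh]; [now left|]. apply in_app_or in Hh as [Hh|[<-|[]]].
  - right; left. apply In_links, Hh.
  - now right; right.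
Qed.

Lemma end_gadget_in_gadgets a r : In (end_gadget a r) (gadgets a r).
Proof. right. apply in_or_app. right. now left. Qed.

Lemma height_gadget a r h : In h (gadgets a r) -> height h <= 4 \/ (r = [] /\ height h = 5).
Proof.
  intro Hh. destruct (gadgets_cases a r h Hh) as [-> | [(x & y & -> & _) | ->]].
  - left. cbn. lia.
  - left. cbn. lia.
  - destruct r; cbn; [right; split; reflexivity|left; lia].
Qed.

Lemma start_le_gadget x a r h : In h (gadgets a r) -> tle qle (start_gadget x) h -> qle x a.
Proof.
  intros Hh H. destruct (gadgets_cases a r h Hh) as [-> | [(c & e & -> & _) | ->]].
  - exact (tower_le_tower _ 3 3 _ _ H).
  - apply tle_height in H. cbn in H. lia.
  - destruct r as [|b r]; [exact (tower_le_tower _ 3 5 _ _ H)|].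
    destruct (tle_node_child _ _ _ _ _ _ H (or_introl eq_refl)) as [tau [<-|[<-|[]]] Htau].
    + exfalso. exact (tle_node_leaf _ _ _ _ Htau).
    + exact (tower_le_tower _ 2 3 _ _ Htau).
Qed.

Lemma link_le_gadget q y a r h : In h (gadgets a r) -> tle qle (link_gadget q y) h ->
  qle y a \/ exists c e, adjacent (a :: r) c e /\ qle y e /\ (qle q c \/ qle q e).
Proof.
  intros Hh H.
  destruct (gadgets_cases a r h Hh) as [-> | [(c & e & -> & Hce) | ->]];
    [|right; exists c, e; split; [exact Hce|]|left; destruct r as [|b r]];
    destruct (tle_node_child _ _ _ _ _ _ H (or_intror (or_introl eq_refl)))
      as [tau Htau Hle]; cbn in Htau.
  - left. destruct Htau as [<-|[]]. exact (tower_le_tower _ 1 2 _ _ Hle).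
  - split.
    + destruct Htau as [<-|[<-|[]]]; [exfalso; exact (tle_node_leaf _ _ _ _ Hle)|].
      exact (tower_le_tower _ 1 1 _ _ Hle).
    + destruct (tle_node_child _ _ _ _ _ _ H (or_introl eq_refl)) as [tau' [<-|[<-|[]]] Hq].
      * left. inversion Hq. assumption.
      * right. exact (tower_le_tower _ 0 1 _ _ Hq).
  - destruct Htau as [<-|[]]. exact (tower_le_tower _ 1 4 _ _ Hle).
  - destruct Htau as [<-|[<-|[]]]; [exfalso; exact (tle_node_leaf _ _ _ _ Hle)|].
    exact (tower_le_tower _ 1 3 _ _ Hle).
Qed.

Lemma end_le_gadget a r b s h : s <> [] -> In h (gadgets b s) ->
  tle qle (end_gadget a r) h -> r <> [] /\ (qle (last r a) (last s b) \/ qle (last r a) b).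
Proof.
  intros Hs Hh H. assert (Hheight := tle_height _ _ _ H).
  destruct r as [|c r].
  - exfalso. destruct (height_gadget b s h Hh) as [Hh4|[E _]]; [|contradiction].
    cbn in Hheight. lia.
  - split; [discriminate|].
    destruct (gadgets_cases b s h Hh) as [-> | [(x & y & -> & _) | ->]]; cbn in Hheight; [lia|lia|].
    destruct s as [|s0 s]; [contradiction|].
    destruct (tle_node_child _ _ _ _ _ _ H (or_introl eq_refl)) as [tau [<-|[<-|[]]] Htau].
    + left. inversion Htau. assumption.
    + right. exact (tower_le_tower _ 0 3 _ _ Htau).
Qed.

Lemma enc_le_head d a r b s : tle qle (enc d (a :: r)) (enc d (b :: s)) -> qle a b.
Proof.
  intro H. destruct (tle_node_child _ _ _ _ _ _ H (or_introl eq_refl)) as [h Hh Hle].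
  exact (start_le_gadget a b s h Hh Hle).
Qed.

Lemma enc_not_le_extension d a r b s :
  good qle W (a :: r ++ b :: s) -> ~ tle qle (enc d (a :: r)) (enc d (a :: r ++ b :: s)).
Proof.
  intros (_ & Hnd & Hanti & _) H.
  destruct (tle_node_child _ _ _ _ _ _ H (end_gadget_in_gadgets a r)) as [h Hh Hle].
  assert (Hrs : r ++ b :: s <> []) by (destruct r; discriminate).
  destruct (end_le_gadget _ _ _ _ _ Hrs Hh Hle) as [Hr [Hlast|Hfirst]];
    assert (Hl : In (last r a) r) by exact (In_last r a Hr);
    assert (Hl' : In (last r a) (a :: r ++ b :: s)) by (right; apply in_or_app; now left).
  - rewrite last_app_cons in Hlast.
    assert (Hl2 : In (last (b :: s) a) (b :: s)) by (apply In_last; discriminate).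
    assert (E : last r a = last (b :: s) a).
    { apply Hanti; [exact Hl'| |exact Hlast]. right. apply in_or_app. now right. }
    apply (NoDup_app_disjoint (a :: r) (b :: s) (last r a) Hnd); [now right|].
    rewrite E. exact Hl2.
  - assert (E : last r a = a) by (apply Hanti; [exact Hl'|now left|exact Hfirst]).
    apply NoDup_cons_iff in Hnd. apply (proj1 Hnd). rewrite <- E.
    apply in_or_app. now left.
Qed.

Lemma enc_le_first_difference d p a r b s : good qle W (p ++ a :: r) -> good qle W (p ++ b :: s) ->
  tle qle (enc d (p ++ a :: r)) (enc d (p ++ b :: s)) -> qle a b.
Proof.
  intros G1 G2 H. destruct p as [|p0 p']; [exact (enc_le_head _ _ _ _ _ H)|].
  destruct (exists_last (l := p0 :: p') ltac:(discriminate)) as (p1 & q & Ep).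
  assert (Hq : In q (p0 :: p')) by (rewrite Ep; apply in_or_app; right; now left).
  assert (adj : forall c t, adjacent ((p0 :: p') ++ c :: t) q c).
  { intros c t. exists p1, t. rewrite Ep, <- app_assoc. reflexivity. }
  assert (Hlink : In (link_gadget q a) (gadgets p0 (p' ++ a :: r))).
  { right. apply in_or_app. left. apply adjacent_in_links, adj. }
  destruct (tle_node_child _ _ _ _ _ _ H Hlink) as [h Hh Hqa].
  destruct G2 as (_ & Hnd2 & Hanti2 & _).
  assert (Hq2 : In q ((p0 :: p') ++ b :: s)) by (apply in_or_app; now left).
  destruct (link_le_gadget _ _ _ _ _ Hh Hqa) as [Hle | (c & e & Hce & Hle & [Hqc|Hqe])].
  - exfalso. exact (good_not_le_earlier _ _ _ _ _ _ G1 (or_introl eq_refl) Hle).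
  - destruct (adjacent_In _ _ _ Hce) as [Hc _].
    rewrite <- (Hanti2 q c Hq2 Hc Hqc) in Hce.
    rewrite (adjacent_unique _ _ _ _ Hnd2 Hce (adj b s)) in Hle. exact Hle.
  - exfalso. destruct (adjacent_In _ _ _ Hce) as [_ He].
    rewrite <- (Hanti2 q e Hq2 He Hqe) in Hle.
    exact (good_not_le_earlier _ _ _ _ _ _ G1 Hq Hle).
Qed.

Lemma enc_reflect d l1 l2 : good qle W l1 -> good qle W l2 ->
  tle qle (enc d l1) (enc d l2) -> lex_le W l1 l2.
Proof.
  intros G1 G2 H.
  destruct (common_prefix l1 l2)
    as (p & r & s & -> & -> & [-> | [-> | (a & r' & b & s' & -> & -> & Hab)]]).
  - destruct s as [|b s]; [now right|]. exfalso. rewrite app_nil_r in G1, H.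
    destruct p as [|a p]; [exact (proj1 G1 eq_refl)|].
    exact (enc_not_le_extension d a p b s G2 H).
  - destruct r as [|a r]; [now right|]. left. apply lex_lt_app_l. exact I.
  - left. apply lex_lt_app_l. left.
    assert (Hleast := proj2 (proj2 (proj2 G1))). rewrite Forall_forall in Hleast.
    assert (Ha : In a (p ++ a :: r')) by (apply in_or_app; right; now left).
    destruct (Hleast a Ha b (enc_le_first_difference _ _ _ _ _ _ G1 G2 H)) as [E|Hlt];
      [contradiction|exact Hlt].
Qed.

Lemma height_enc d l : height (enc d l) <= 6.
Proof.
  destruct l as [|a r]; cbn [enc height]; [lia|]. apply le_n_S, list_max_le, Forall_forall.
  intros k Hk. apply in_map_iff in Hk as (h & <- & Hh).
  destruct (height_gadget a r h Hh) as [H|[_ H]]; lia.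
Qed.

Lemma tower_not_le_enc d x l : ~ tle qle (tower 7 x) (enc d l).
Proof.
  intro H. apply tle_height in H. rewrite height_tower in H. pose proof (height_enc d l). lia.
Qed.

End Encoding.

Section CodeLinearization.
Context {S T : Type} (le : T -> T -> Prop) (lt : S -> S -> Prop)
  (valid : S -> Prop) (code : S -> T).
Hypothesis le_qo : quasi_order le.
Hypothesis lt_irrefl : forall s, ~ lt s s.
Hypothesis lt_trans : forall s1 s2 s3, lt s1 s2 -> lt s2 s3 -> lt s1 s3.
Hypothesis lt_total : forall s1 s2, s1 <> s2 -> lt s1 s2 \/ lt s2 s1.
Hypothesis code_reflect : forall s1 s2, valid s1 -> valid s2 ->
  le (code s1) (code s2) -> lt s1 s2 \/ s1 = s2.

Definition below_code t := exists2 s, valid s & le t (code s).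

Definition codes_below t r := exists s, valid s /\ le (code s) t /\ (lt r s \/ r = s).

Definition code_lin t u :=
  ~ below_code u \/ (below_code t /\ forall r, codes_below t r -> codes_below u r).

Lemma below_code_antitone t u : le t u -> below_code u -> below_code t.
Proof. intros Htu [s Hs Hu]. exists s; [exact Hs|]. exact (proj2 le_qo _ _ _ Htu Hu). Qed.

Lemma codes_below_mono t u r : le t u -> codes_below t r -> codes_below u r.
Proof.
  intros Htu (s & Hs & Hst & Hr). exists s. repeat split; [exact Hs| |exact Hr].
  exact (proj2 le_qo _ _ _ Hst Htu).
Qed.

Lemma codes_below_code s r : valid s -> codes_below (code s) r <-> lt r s \/ r = s.
Proof.
  intro Hs. split.
  - intros (s' & Hs' & Hle & Hr). destruct (code_reflect s' s Hs' Hs Hle) as [Hlt| ->]; [|exact Hr].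
    left. destruct Hr as [Hr| ->]; eauto.
  - intro Hr. exists s. repeat split; auto. apply (proj1 le_qo).
Qed.

Lemma codes_below_comparable t u :
  (forall r, codes_below t r -> codes_below u r) \/ (forall r, codes_below u r -> codes_below t r).
Proof.
  destruct (classic (forall r, codes_below t r -> codes_below u r)) as [H|H]; [now left|right].
  apply not_all_ex_not in H as [r0 H]. apply imply_to_and in H as [(s0 & Hs0 & Hs0t & Hr0) Hr0u].
  intros r (s & Hs & Hsu & Hr). exists s0. repeat split; [exact Hs0|exact Hs0t|].
  assert (Hsr0 : lt s r0).
  { destruct (classic (s = r0)) as [->|Hne]; [exfalso; apply Hr0u; exists r0; auto|].
    destruct (lt_total s r0 Hne) as [Hlt|Hlt]; [exact Hlt|].
    exfalso. apply Hr0u. exists s. auto. }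
  left. destruct Hr as [Hr| ->]; destruct Hr0 as [Hr0| ->]; eauto.
Qed.

Lemma code_lin_linearization : linearization le code_lin.
Proof.
  split; [split|split].
  - intro t. destruct (classic (below_code t)); [right|left]; auto.
  - intros t u v Htu [Hv|[Hu Huv]]; [now left|right].
    destruct Htu as [Htu|[Ht Htu]]; [contradiction|]. auto.
  - intros t u.
    destruct (classic (below_code u)) as [Hu|Hu]; [|left; now left].
    destruct (classic (below_code t)) as [Ht|Ht]; [|right; now left].
    destruct (codes_below_comparable t u); [left|right]; right; auto.
  - intros t u Htu. destruct (classic (below_code u)) as [Hu|Hu]; [right|now left].
    split; [exact (below_code_antitone t u Htu Hu)|]. intro r. apply codes_below_mono, Htu.
Qed.

Lemma code_lin_strict s1 s2 : valid s1 -> valid s2 -> lt s1 s2 ->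
  strict code_lin (code s1) (code s2).
Proof.
  intros Hs1 Hs2 Hlt. split.
  - right. split; [exists s1; [exact Hs1|apply (proj1 le_qo)]|].
    intros r Hr. apply codes_below_code in Hr; [|exact Hs1]. apply codes_below_code; [exact Hs2|].
    left. destruct Hr as [Hr| ->]; eauto.
  - intros [H|[_ H]]; [apply H; exists s1; [exact Hs1|apply (proj1 le_qo)]|].
    assert (Hs2s1 : codes_below (code s1) s2).
    { apply H, codes_below_code; [exact Hs2|now right]. }
    apply codes_below_code in Hs2s1; [|exact Hs1].
    destruct Hs2s1 as [Hlt'| ->]; [exact (lt_irrefl s1 (lt_trans _ _ _ Hlt Hlt'))|].
    exact (lt_irrefl s1 Hlt).
Qed.

Lemma code_lin_top t s : ~ below_code t -> valid s -> strict code_lin (code s) t.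
Proof.
  intros Ht Hs. split; [now left|].
  intros [H|[H _]]; [apply H; exists s; [exact Hs|apply (proj1 le_qo)]|contradiction].
Qed.

Lemma code_linearization : exists L, linearization le L /\
  (forall s1 s2, valid s1 -> valid s2 -> lt s1 s2 -> strict L (code s1) (code s2)) /\
  (forall t, ~ below_code t -> forall s, valid s -> strict L (code s) t).
Proof.
  exists code_lin. split; [exact code_lin_linearization|]. split.
  - exact code_lin_strict.
  - intros t Ht s. exact (code_lin_top t s Ht).
Qed.

End CodeLinearization.

Lemma linearization_good_codes {X : Type} (le W : X -> X -> Prop) :
  wqo le -> well_order_extending (strict le) W -> forall M, linearization le M ->
  exists f : X -> list X, (forall x, good le W (f x)) /\
    (forall x y, strict M x y -> lex_lt W (f x) (f y)).
Proof.
  intros le_wqo W_wo M ((M_refl & M_trans) & _ & M_ext).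
  destruct (choice _ (fun x => greedy_exists le W le_wqo W_wo (M x) [])) as [f Hf].
  assert (up : forall x y z, M x y -> le y z -> M x z) by eauto.
  exists f. split.
  - intro x. apply (greedy_good le W le_wqo W_wo (M x)); [exact (up x)|exists x; auto|apply Hf].
  - intros x y [Hxy Hyx].
    destruct (greedy_antitone le W (M x) (M y) [] (f x) (f y)) as [Hlt|Heq]; eauto.
    exfalso. apply Hyx.
    apply (greedy_generates le W (M y) [] (f y) (up y) (fun _ H => match H with end) (Hf y)).
    rewrite <- Heq.
    apply (greedy_generates le W (M x) [] (f x) (up x) (fun _ H => match H with end) (Hf x)).
    apply M_refl.
Qed.

Theorem proposition3p14 (Q : Type) (qle : Q -> Q -> Prop) :
  wqo qle -> inhabited Q -> o_lt qle (tle qle).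
Proof.
  intros qle_wqo [d].
  destruct (well_order_extension (strict qle)) as [W W_wo].
  { apply strict_trans, qle_wqo. }
  { apply wqo_strict_wf, qle_wqo. }
  destruct (code_linearization (tle qle) (lex_lt W) (good qle W) (enc d))
    as (L & HL & L_codes & L_top).
  { apply tle_quasi_order, qle_wqo. }
  { apply lex_lt_irrefl, (wo_irrefl _ _ W_wo). }
  { apply lex_lt_trans, (wo_trans _ _ W_wo). }
  { apply lex_lt_total, (wo_total _ _ W_wo). }
  { apply enc_reflect. }
  exists L, (tower 7 d). split; [exact HL|].
  intros M HM.
  destruct (linearization_good_codes qle W qle_wqo W_wo M HM) as (f & f_good & f_mono).
  exists (fun x => enc d (f x)). split.
  - intros x y Hxy. apply L_codes; auto.
  - intro x. apply L_top; [|apply f_good]. intros [l _ Hle].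
    exact (tower_not_le_enc qle d d l Hle).
Qed.
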